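(* Let $B,n'\ge1$ be integers, $n=2Bn'$, $s\ge0$, and let $f:\{0,1\}^{n'}\to\{\pm\tfrac12\}$ be a balanced function with $I(f)\le s$. Let $W=\mathrm{Span}\{f_z : z\in\{0,1\}^B\}\subseteq\mathbb{C}^{2^n}$ with $f_z$ as defined below. Then for every $\phi\in W$, $$2^{n-1}I(\phi)\le 2s\,|\phi^*\phi|.$$
   Context: A function $g:\{0,1\}^m\to\mathbb{C}$ is identified with the vector $\sum_x g(x)|x\rangle\in\mathbb{C}^{2^m}$. For $g:\{0,1\}^m\to\mathbb{C}$ and $i\in[m]$, $I_i(g)=\mathbb{E}_{x\in\{0,1\}^m}|g(x)-g(x\oplus e_i)|^2$ and $I(g)=\max_i I_i(g)$. Balanced means $f$ takes each value on exactly half the inputs. Partition $[n]$ into $2B$ consecutive blocks of length $n'$; for $x\in\{0,1\}^n$, $i\in[B]$, $b\in\{0,1\}$, $x_{i,b}\in\{0,1\}^{n'}$ is the restriction of $x$ to the $(2i-1+b)$-th block. For $z\in\{0,1\}^B$, $f_z(x)=f(x_{1,z_1})\cdots f(x_{B,z_B})$. *)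

(* Complex scalars: an arbitrary numClosedFieldType C
   (e.g. the complex numbers), which contains the genuine case C = complex. *)
From mathcomp Require Import all_boot all_order all_algebra.
From mathcomp Require Import zify.
Set Implicit Arguments. Unset Strict Implicit. Unset Printing Implicit Defensive.
Import Order.TTheory GRing.Theory Num.Theory.
Local Open Scope ring_scope.

Notation cube m := {ffun 'I_m -> bool}.

Definition flip (m : nat) (x : cube m) (i : 'I_m) : cube m :=
  [ffun j => x j (+) (j == i)].

Section Influence.
Variable C : numClosedFieldType.

Definition Infl_i (m : nat) (g : cube m -> C) (i : 'I_m) : C :=
  (2 ^+ m)^-1 * \sum_(x : cube m) `|g x - g (flip x i)| ^+ 2.

(* I(g) = max_i I_i(g)  (all I_i(g) are real and >= 0, so 0 is a neutral default) *)
Definition Infl (m : nat) (g : cube m -> C) : C :=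
  \big[Num.max/0]_(i < m) Infl_i g i.

Definition sqnorm (m : nat) (g : cube m -> C) : C :=
  \sum_(x : cube m) Num.conj (g x) * g x.

Definition balanced (m : nat) (f : cube m -> C) : Prop :=
  (2 * #|[set x | f x == 1/2]| = 2 ^ m)%N /\
  (2 * #|[set x | f x == -(1/2)]| = 2 ^ m)%N.

End Influence.

Lemma blk_ltn (B n' : nat) (i : 'I_B) (b : bool) (j : 'I_n') :
  ((2 * i + b) * n' + j < 2 * B * n')%N.
Proof.
have hi := ltn_ord i; have hj := ltn_ord j.
have hb : (b <= 1)%N by case: b.
have h1 : ((2 * i + b).+1 <= 2 * B)%N by lia.
have h2 : ((2 * i + b).+1 * n' <= 2 * B * n')%N by rewrite leq_mul2r h1 orbT.
rewrite mulSn in h2; lia.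
Qed.

(* x_{i,b}: restriction of x to the (2i-1+b)-th block (1-based i), i.e. the
   block with 0-based index 2i+b for 0-based i : 'I_B *)
Definition restr (B n' : nat) (x : cube (2 * B * n')) (i : 'I_B) (b : bool)
  : cube n' := [ffun j => x (Ordinal (blk_ltn i b j))].

Definition fz (C : numClosedFieldType) (B n' : nat) (f : cube n' -> C)
  (z : cube B) (x : cube (2 * B * n')) : C :=
  \prod_(i < B) f (restr x i (z i)).

Definition inW (C : numClosedFieldType) (B n' : nat) (f : cube n' -> C)
  (phi : cube (2 * B * n') -> C) : Prop :=
  exists c : cube B -> C, forall x, phi x = \sum_(z : cube B) c z * fz f z x.

From mathcomp Require Import all_boot all_order all_algebra.
From mathcomp Require Import zify ring.
Set Implicit Arguments. Unset Strict Implicit. Unset Printing Implicit Defensive.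
Import Order.TTheory GRing.Theory Num.Theory.
Local Open Scope ring_scope.

(* Fix a coordinate, lying in block (k, b).  Splitting the span of the f_z
   according to whether z_k = b writes phi(x) = f(x_{k,b}) G(x) + H(x) with G
   and H independent of block (k, b).  Flipping the coordinate only changes the
   factor f(x_{k,b}), so averaging over that block gives
   sum |phi(x) - phi(x + e_i)|^2 = I_j(f) sum |G|^2; and since f = +-1/2 is
   balanced, the cross terms of |phi|^2 average out:
   phi^* phi = 1/4 sum |G|^2 + sum |H|^2.  Hence
   2^(n-1) I_i(phi) = 1/2 I_j(f) sum |G|^2 <= 2 s phi^* phi. *)

Definition cube_add m (x w : cube m) : cube m := [ffun t => x t (+) w t].

Definition cube_unit m (j : 'I_m) : cube m := [ffun t => t == j].

Lemma cube_addE m (x w : cube m) t : cube_add x w t = x t (+) w t.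
Proof. by rewrite ffunE. Qed.

Lemma cube_addK m (w : cube m) : involutive (fun x => cube_add x w).
Proof. by move=> x; apply/ffunP => t; rewrite !ffunE addbK. Qed.

Lemma cube_addKl m (w : cube m) : involutive (@cube_add m w).
Proof. by move=> x; apply/ffunP => t; rewrite !ffunE addKb. Qed.

Lemma cube_add_unit m (x : cube m) j : cube_add x (cube_unit j) = flip x j.
Proof. by apply/ffunP => t; rewrite !ffunE. Qed.

Section Blocks.
Variables B n' : nat.
Local Notation N := (2 * B * n')%N.

Definition block_idx (k : 'I_B) (b : bool) (j : 'I_n') : 'I_N :=
  Ordinal (blk_ltn k b j).

Lemma restrE x k b j : restr x k b j = x (block_idx k b j).
Proof. by rewrite ffunE. Qed.

Lemma block_idx_inj k1 k2 b1 b2 j1 j2 :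
  block_idx k1 b1 j1 = block_idx k2 b2 j2 -> [/\ k1 = k2, b1 = b2 & j1 = j2].
Proof.
move=> /(congr1 val) /= e.
have n'_gt0 : (0 < n')%N := leq_ltn_trans (leq0n _) (ltn_ord j1).
have := congr1 (divn^~ n') e; rewrite !divnMDl // !divn_small // !addn0 => eq_blk.
move: e; rewrite eq_blk => /addnI /ord_inj ->.
case: b1 b2 eq_blk => [] [] /= eq_blk; try (exfalso; lia).
all: by split=> //; apply: ord_inj; lia.
Qed.

Lemma block_idx_surj (i : 'I_N) : exists k b j, i = block_idx k b j.
Proof.
have n'_gt0 : (0 < n')%N.
  by move: (nat_of_ord i) (ltn_ord i) => m; case: (n') => //; rewrite muln0.
have blk_lt : (i %/ n' < 2 * B)%N by rewrite ltn_divLR.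
have blk_half := odd_double_half (i %/ n'); rewrite -muln2 in blk_half.
have k_lt : ((i %/ n')./2 < B)%N by lia.
exists (Ordinal k_lt), (odd (i %/ n')), (Ordinal (ltn_pmod i n'_gt0)).
apply: val_inj => /=.
have -> : (2 * (i %/ n')./2 + odd (i %/ n') = i %/ n')%N by lia.
exact: divn_eq.
Qed.

Definition block_embed k b (y : cube n') : cube N :=
  [ffun t => [exists j, (t == block_idx k b j) && y j]].

Lemma block_embed_idx k b y k' b' j :
  block_embed k b y (block_idx k' b' j) = ((k', b') == (k, b)) && y j.
Proof.
rewrite ffunE; apply/existsP/idP => [[j' /andP[/eqP/block_idx_inj[-> -> ->]]]|].
  by rewrite eqxx.
by case/andP=> /eqP[-> ->] yj; exists j; rewrite eqxx.
Qed.

Lemma restr_add_block x k b y :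
  restr (cube_add x (block_embed k b y)) k b = cube_add (restr x k b) y.
Proof.
by apply/ffunP => j; rewrite !(restrE, cube_addE) block_embed_idx eqxx.
Qed.

Lemma restr_add_block_other x k b y k' b' : (k', b') != (k, b) ->
  restr (cube_add x (block_embed k b y)) k' b' = restr x k' b'.
Proof.
move=> /negPf kb'; apply/ffunP => j.
by rewrite !restrE cube_addE block_embed_idx kb' addbF.
Qed.

Lemma flip_block_idx x k b j :
  flip x (block_idx k b j) = cube_add x (block_embed k b (cube_unit j)).
Proof.
apply/ffunP => t; have [k' [b' [j' ->]]] := block_idx_surj t.
rewrite ffunE cube_addE block_embed_idx ffunE; congr (_ (+) _).
apply/eqP/andP => [/block_idx_inj[-> -> ->]|[/eqP[-> ->] /eqP -> //]].
by rewrite !eqxx.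
Qed.

End Blocks.

Definition block_invariant (T : Type) B n' (k : 'I_B) (b : bool)
  (g : cube (2 * B * n') -> T) :=
  forall x y, g (cube_add x (block_embed k b y)) = g x.

Lemma sum_block_factor (R : pzSemiRingType) B n' (k : 'I_B) b (a : cube n' -> R) g :
  block_invariant k b g ->
  2 ^+ n' * \sum_x a (restr x k b) * g x = (\sum_y a y) * \sum_x g x.
Proof.
move=> g_inv.
have card_cube : #|{: cube n'}| = (2 ^ n')%N by rewrite card_ffun card_bool card_ord.
transitivity (\sum_(y : cube n') \sum_x a (cube_add (restr x k b) y) * g x).
  rewrite -natrX mulr_natl -card_cube -sumr_const; apply: eq_bigr => y _.
  rewrite (reindex_inj (inv_inj (cube_addK (block_embed k b y)))) /=.
  by apply: eq_bigr => x _; rewrite restr_add_block g_inv.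
rewrite exchange_big mulr_sumr; apply: eq_bigr => x _ /=.
rewrite -mulr_suml; congr (_ * _).
by rewrite [RHS](reindex_inj (inv_inj (cube_addKl (restr x k b)))).
Qed.

Section Influence.
Variable C : numClosedFieldType.

Lemma Infl_i_ge0 m (g : cube m -> C) i : 0 <= Infl_i g i.
Proof.
rewrite mulr_ge0 ?invr_ge0 ?exprn_ge0 ?ler0n //.
by apply: sumr_ge0 => x _; rewrite exprn_ge0.
Qed.

Lemma le_Infl_i m (g : cube m -> C) i : Infl_i g i <= Infl g.
Proof.
have Infl_i_real j : Infl_i g j \is Num.real := ger0_real (Infl_i_ge0 g j).
suff le_seq r : i \in r -> Infl_i g i <= \big[Num.max/0]_(j <- r) Infl_i g j.
  by apply: le_seq; rewrite mem_index_enum.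
elim: r => //= j r IH; rewrite in_cons big_cons => /orP[/eqP <-|/IH le_i].
  by rewrite comparable_le_max ?lexx // real_comparable // bigmax_real.
by rewrite comparable_le_max ?le_i ?orbT // real_comparable // bigmax_real.
Qed.

Lemma Infl_attained m (g : cube m -> C) : Infl g = 0 \/ exists i, Infl g = Infl_i g i.
Proof.
rewrite /Infl; elim/big_ind: _ => [|u v Pu Pv|i _]; [by left | | by right; exists i].
by rewrite maxEle; case: ifP.
Qed.

Lemma balanced_sum_eq0 n' (f : cube n' -> C) :
  (forall x, f x = 1/2 \/ f x = -(1/2)) -> balanced f -> \sum_y f y = 0.
Proof.
move=> f_pm [card_half _]; set A := [set x | f x == 1/2] in card_half.
have card_compl : #|~: A| = #|A|.
  by have := cardsC A; rewrite card_ffun card_bool card_ord; lia.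
rewrite (bigID (mem A)) /= [X in _ + X](eq_bigl (fun y => y \in ~: A)) => [|y]; last first.
  by rewrite /= in_setC.
rewrite (eq_bigr (fun=> 1/2)) => [|y]; last by rewrite /A inE => /eqP.
rewrite [X in _ + X](eq_bigr (fun=> -(1/2))) => [|y]; last first.
  by rewrite in_setC /A inE; case: (f_pm y) => ->; rewrite ?eqxx.
by rewrite !sumr_const card_compl mulNrn subrr.
Qed.

End Influence.

Lemma inW_block_decomp (C : numClosedFieldType) B n' (f : cube n' -> C) phi
    (k : 'I_B) (b : bool) :
  inW f phi -> exists G H, [/\ block_invariant k b G, block_invariant k b H &
    forall x, phi x = f (restr x k b) * G x + H x].
Proof.
case=> c phiE.
exists (fun x =>
  \sum_(z : cube B | z k == b) c z * \prod_(l | l != k) f (restr x l (z l))).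
exists (fun x => \sum_(z : cube B | z k != b) c z * fz f z x); split.
- move=> x y; apply: eq_bigr => z _; congr (_ * _); apply: eq_bigr => l l_neq_k.
  by rewrite restr_add_block_other // xpair_eqE negb_and l_neq_k.
- move=> x y; apply: eq_bigr => z z_neq_b; congr (_ * _); apply: eq_bigr => l _.
  rewrite restr_add_block_other // xpair_eqE negb_and.
  by case: (eqVneq l k) => [->|]; rewrite ?z_neq_b ?orbT.
- move=> x; rewrite phiE (bigID (fun z : cube B => z k == b)) /= mulr_sumr.
  congr (_ + _); apply: eq_bigr => z /eqP z_k.
  by rewrite /fz (bigD1 k) //= z_k mulrCA.
Qed.

Section BlockDecomposition.
Variables (C : numClosedFieldType) (B n' : nat) (k : 'I_B) (b : bool).
Variables (f : cube n' -> C) (G H phi : cube (2 * B * n') -> C).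
Hypotheses (G_inv : block_invariant k b G) (H_inv : block_invariant k b H).
Hypothesis phiE : forall x, phi x = f (restr x k b) * G x + H x.

Let two_pow_neq0 m : (2 : C) ^+ m != 0.
Proof. by rewrite expf_neq0 // pnatr_eq0. Qed.

Lemma sum_sqdiff_flip_block j :
  \sum_x `|phi x - phi (flip x (block_idx k b j))| ^+ 2 =
  Infl_i f j * \sum_x `|G x| ^+ 2.
Proof.
have diffE x : phi x - phi (flip x (block_idx k b j)) =
    (f (restr x k b) - f (flip (restr x k b) j)) * G x.
  by rewrite flip_block_idx !phiE restr_add_block cube_add_unit G_inv H_inv; ring.
apply: (mulfI (two_pow_neq0 n')).
under eq_bigr do rewrite diffE normrM exprMn.
rewrite (@sum_block_factor _ _ _ k b (fun y => `|f y - f (flip y j)| ^+ 2)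
  (fun x => `|G x| ^+ 2)) => [|x y]; last by rewrite /= G_inv.
by rewrite /Infl_i !mulrA mulfV // mul1r.
Qed.

Lemma sqnorm_block (a : C) :
  (forall y, (f y)^* = f y) -> (forall y, f y ^+ 2 = a) -> \sum_y f y = 0 ->
  sqnorm phi = a * \sum_x `|G x| ^+ 2 + \sum_x `|H x| ^+ 2.
Proof.
move=> f_real f_sq f_sum0.
have cross_eq0 : \sum_x f (restr x k b) * ((G x)^* * H x + (H x)^* * G x) = 0.
  apply: (mulfI (two_pow_neq0 n')); rewrite mulr0 (sum_block_factor f).
    by rewrite f_sum0 mul0r.
  by move=> x y; rewrite G_inv H_inv.
rewrite /sqnorm mulr_sumr -[RHS]addr0 -[X in _ + X]cross_eq0 -!big_split /=.
apply: eq_bigr => x _; rewrite phiE rmorphD rmorphM /= f_real !normCKC.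
rewrite -(f_sq (restr x k b)); ring.
Qed.

Lemma Infl_i_block_le (s : C) j :
  (forall y, f y = 1/2 \/ f y = -(1/2)) -> balanced f -> Infl f <= s ->
  2 ^+ (2 * B * n').-1 * Infl_i phi (block_idx k b j) <= 2 * s * `|sqnorm phi|.
Proof.
move=> f_pm f_bal Infl_f_le.
have f_real y : (f y)^* = f y.
  apply/eqP; rewrite -CrealE.
  by case: (f_pm y) => ->; rewrite ?rpredN rpred_div ?rpred1 ?rpred_nat.
have f_sq y : f y ^+ 2 = (1/2) ^+ 2 by case: (f_pm y) => ->; rewrite ?sqrrN.
have := sqnorm_block f_real f_sq (balanced_sum_eq0 f_pm f_bal).
set SG := \sum_x _; set SH := \sum_x _ => sqnormE.
have SG_ge0 : 0 <= SG by apply: sumr_ge0 => x _; rewrite exprn_ge0.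
have SH_ge0 : 0 <= SH by apply: sumr_ge0 => x _; rewrite exprn_ge0.
have Infl_f_j : Infl_i f j <= s := le_trans (le_Infl_i f j) Infl_f_le.
have N_gt0 : (0 < 2 * B * n')%N := leq_ltn_trans (leq0n _) (ltn_ord (block_idx k b j)).
have q_ge0 : 0 <= (1/2) ^+ 2 * SG by rewrite mulr_ge0 ?exprn_ge0 ?divr_ge0 ?ler0n.
rewrite /Infl_i sum_sqdiff_flip_block sqnormE ger0_norm ?addr_ge0 //.
rewrite -[in (2 ^+ (2 * B * n'))^-1](prednK N_gt0) exprS.
have -> : 2 ^+ (2 * B * n').-1 * ((2 * 2 ^+ (2 * B * n').-1)^-1 * (Infl_i f j * SG))
    = 2 * (Infl_i f j * ((1/2) ^+ 2 * SG)) :> C by field; rewrite two_pow_neq0.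
rewrite -mulrA ler_wpM2l ?ler0n //.
apply: le_trans (ler_wpM2r q_ge0 Infl_f_j) _.
by rewrite ler_wpM2l ?lerDl // (le_trans (Infl_i_ge0 f j)).
Qed.

End BlockDecomposition.

Theorem lemma2 (C : numClosedFieldType) (B n' : nat) (s : C)
  (f : cube n' -> C) :
  (0 < B)%N -> (0 < n')%N -> 0 <= s ->
  (forall x, f x = 1/2 \/ f x = -(1/2)) ->
  balanced f ->
  Infl f <= s ->
  forall phi : cube (2 * B * n') -> C, inW f phi ->
  2 ^+ (2 * B * n').-1 * Infl phi <= 2 * s * `|sqnorm phi|.
Proof.
move=> _ _ s_ge0 f_pm f_bal Infl_f_le phi phi_inW.
have [->|[i ->]] := Infl_attained phi.
  by rewrite mulr0 !mulr_ge0 ?ler0n.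
have [k [b [j ->]]] := block_idx_surj i.
have [G [H [G_inv H_inv phiE]]] := inW_block_decomp k b phi_inW.
exact: Infl_i_block_le G_inv H_inv phiE s j f_pm f_bal Infl_f_le.
Qed.
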